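(* Let $U\le\mathbb{F}_q^k$ be a subspace with $\dim U=k-\ell$, and let $\mathcal{P}=\{x+U:x\in\mathbb{F}_q^k\}$ be its coset partition. If $$\big|\{e_i+U:\ i\in[k],\ e_i\notin U\}\big|=\ell,$$ where $e_i$ is the $i$-th standard basis vector, then the partition graph $G_{\mathcal{P}}$ contains a clique of size $q^{\ell}$ (i.e., containing exactly one vector from each coset of $U$).
   Context: $d$ is Hamming distance; for distinct blocks $d(P,P')=\min_{u\in P,v\in P'}d(u,v)$. The partition graph $G_{\mathcal{P}}$ of a partition $\mathcal{P}$ of $\mathbb{F}_q^k$ has vertex set $\mathbb{F}_q^k$, and vertices $u\in P$, $v\in P'$ (blocks of $\mathcal{P}$) are adjacent iff $P\ne P'$ and $d(u,v)=d(P,P')$. *)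

From HB Require Import structures.
From mathcomp Require Import all_boot all_order all_algebra.
Set Implicit Arguments. Unset Strict Implicit. Unset Printing Implicit Defensive.
Import GRing.Theory.
Local Open Scope ring_scope.

Section Defs.
Variables (F : finFieldType) (k : nat).
Notation V := 'rV[F]_k.

Definition hamming (u v : V) : nat := #|[set i : 'I_k | u 0 i != v 0 i]|.

(* distance between two blocks: min over pairs (blocks are nonempty, and
   hamming distances are <= k, so the default k is harmless) *)
Definition block_dist (P P' : {set V}) : nat :=
  \big[minn/k]_(u in P) \big[minn/k]_(v in P') hamming u v.

Definition pgraph_adj (Pt : {set {set V}}) (u v : V) : bool :=
  (pblock Pt u != pblock Pt v) &&
  (hamming u v == block_dist (pblock Pt u) (pblock Pt v)).

Definition is_clique (Pt : {set {set V}}) (C : {set V}) : Prop :=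
  forall u v, u \in C -> v \in C -> u != v -> pgraph_adj Pt u v.

Definition coset (U : {vspace V}) (x : V) : {set V} :=
  [set y : V | (y - x) \in U].

Definition coset_partition (U : {vspace V}) : {set {set V}} :=
  [set coset U x | x in [set: V]].

Definition std_e (i : 'I_k) : V := delta_mx 0 i.
End Defs.
Arguments std_e {F k} i.

(* Let [U] have codimension [l] and pick one index [m] in each coset [e_j + U] with [e_j \notin U].
   By hypothesis there are [l] such indices, and the span [W] of the chosen [e_m] satisfies
   [U + W = F^k] (every [e_j] lies in [U] or in some [e_m + U]); counting dimensions, [W] is a
   complement of [U], so it meets each coset of [U] exactly once and has [q^l] elements.
   The projection onto [W] along [U] sends [y] to [sum_j y_j e_(m(j))], which never increases
   the support size; hence each [w \in W] has minimal weight in [w + U], so [d(u, v) = wt (u - v)]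
   is the distance between the cosets of [u] and [v] for all [u, v \in W]: [W] is a clique. *)
From HB Require Import structures.
From mathcomp Require Import all_boot all_order all_algebra.
From mathcomp Require Import finfield zify.
Set Implicit Arguments. Unset Strict Implicit. Unset Printing Implicit Defensive.
Import Order.TTheory GRing.Theory.
Local Open Scope ring_scope.

Section CosetPartition.
Variables (F : finFieldType) (k : nat).
Local Notation V := 'rV[F]_k.
Implicit Types (U W : {vspace V}) (u v w x y : V).

Definition wt y : nat := #|[set i | y 0 i != 0]|.

Lemma hamming_wt u v : hamming u v = wt (u - v).
Proof. by apply: eq_card => i; rewrite !inE !mxE subr_eq0. Qed.

Lemma std_eE (i j : 'I_k) : std_e i 0 j = (i == j)%:R :> F.
Proof. by rewrite /std_e mxE eqxx eq_sym. Qed.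

Lemma mem_coset U x : x \in coset U x.
Proof. by rewrite inE subrr mem0v. Qed.

Lemma coset_eqP U x y : reflect (coset U x = coset U y) (x - y \in U).
Proof.
apply: (iffP idP) => [xyU | exy]; last by have := mem_coset U x; rewrite exy inE.
apply/setP=> z; rewrite !inE; apply/idP/idP => zU.
  by rewrite -(subrK x z) -addrA; apply: memvD.
by rewrite -(subrK y z) -addrA -(opprB x y); apply: memvB.
Qed.

Lemma pblock_coset_partition U x : pblock (coset_partition U) x = coset U x.
Proof.
apply: def_pblock; last exact: mem_coset; last by rewrite imset_f ?inE.
apply/trivIsetP => _ _ /imsetP[a _ ->] /imsetP[b _ ->] neq_ab.
rewrite -setI_eq0; apply/eqP/setP => z; rewrite !inE.
apply/negbTE/andP => -[azU bzU]; move/eqP: neq_ab; apply; apply/coset_eqP.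
have -> : a - b = (z - b) - (z - a) by rewrite opprB [RHS]addrC addrA subrK.
exact: memvB.
Qed.

Lemma block_dist_attained (P P' : {set V}) u v :
  u \in P -> v \in P' ->
  (forall u' v', u' \in P -> v' \in P' -> hamming u v <= hamming u' v')%N ->
  block_dist P P' = hamming u v.
Proof.
move=> uP vP minuv; apply/eqP; rewrite eqn_leq; apply/andP; split.
  apply: leq_trans (@bigmin_le_cond _ nat _ _ _ (mem P) _ uP) _.
  exact: (@bigmin_le_cond _ nat _ _ _ (mem P') _ vP).
have le_k : (hamming u v <= k)%N by rewrite (leq_trans (max_card _)) ?card_ord.
apply: (@le_bigmin _ nat) => // u' u'P.
by apply: (@le_bigmin _ nat) => // v' v'P; apply: minuv.
Qed.

Lemma minimal_complement_clique U W :
  (U :&: W = 0)%VS ->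
  (forall w x, w \in W -> x \in U -> wt w <= wt (w + x))%N ->
  is_clique (coset_partition U) [set v | v \in W].
Proof.
move=> capUW minW u v; rewrite !inE => uW vW neq_uv.
have uvW : u - v \in W by rewrite memvB.
rewrite /pgraph_adj !pblock_coset_partition; apply/andP; split.
  apply/negP => /eqP/coset_eqP uvU; move/negP: neq_uv; apply.
  by rewrite -subr_eq0 -memv0 -capUW memv_cap uvU.
rewrite (block_dist_attained (mem_coset U u) (mem_coset U v)) ?eqxx // => u' v'.
rewrite !inE !hamming_wt => u'U v'U.
rewrite -(subrK u u') -(subrK v v') opprD addrACA addrC.
by apply: minW; rewrite // memvB.
Qed.

End CosetPartition.

Section CosetRepresentatives.
Variables (F : finFieldType) (k : nat) (U : {vspace 'rV[F]_k}).
Local Notation V := 'rV[F]_k.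
Local Notation e := (@std_e F k).

Definition nonU := [set i : 'I_k | e i \notin U].

Definition rep (j : 'I_k) : 'I_k :=
  odflt j [pick i in nonU | coset U (e i) == coset U (e j)].

Definition reps := [set i in nonU | rep i == i].

Definition span_reps := <<[seq e i | i <- enum reps]>>%VS.

Definition proj_reps (y : V) : V := \sum_(j in nonU) y 0 j *: e (rep j).

Lemma rep_spec j : j \in nonU -> rep j \in nonU /\ coset U (e (rep j)) = coset U (e j).
Proof.
move=> jU; rewrite /rep; case: pickP => [i /andP[iU /eqP] // | none].
by move: (none j); rewrite jU eqxx.
Qed.

Lemma rep_coset_eq j j' : j \in nonU -> coset U (e j) = coset U (e j') -> rep j = rep j'.
Proof.
move=> jU ejj'; rewrite /rep ejj'; case: pickP => // none.
by move: (none j); rewrite jU ejj' eqxx.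
Qed.

Lemma rep_in_reps j : j \in nonU -> rep j \in reps.
Proof.
move=> jU; have [repU erep] := rep_spec jU.
by rewrite inE repU (rep_coset_eq repU erep) eqxx.
Qed.

Lemma card_reps : #|[set coset U (e i) | i in nonU]| = #|reps|.
Proof.
have repsU m : m \in reps -> m \in nonU by rewrite inE => /andP[].
have rep_id m : m \in reps -> rep m = m by rewrite inE => /andP[_ /eqP].
have -> : [set coset U (e i) | i in nonU] = [set coset U (e i) | i in reps].
  apply/setP => c; apply/imsetP/imsetP => -[j jU ->]; last by exists j; rewrite ?repsU.
  by exists (rep j); rewrite ?rep_in_reps // (proj2 (rep_spec jU)).
apply: card_in_imset => m m' mS m'S emm'.
by rewrite -(rep_id _ mS) -(rep_id _ m'S) (rep_coset_eq (repsU _ mS) emm').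
Qed.

Lemma std_e_span_reps m : m \in reps -> e m \in span_reps.
Proof. by move=> mS; rewrite memv_span // map_f // mem_enum. Qed.

Lemma proj_reps_span y : proj_reps y \in span_reps.
Proof. by apply: memv_suml => j jU; rewrite memvZ // std_e_span_reps ?rep_in_reps. Qed.

Lemma sub_proj_reps y : y - proj_reps y \in U.
Proof.
rewrite {1}(row_sum_delta y) (bigID (mem nonU)) /= addrAC -sumrB.
apply: memvD; apply: memv_suml => j jU; last by rewrite inE negbK in jU; rewrite memvZ.
by rewrite -scalerBr memvZ //; apply/coset_eqP; rewrite (proj2 (rep_spec jU)).
Qed.

Lemma wt_proj_reps y : (wt (proj_reps y) <= wt y)%N.
Proof.
rewrite /wt (leq_trans _ (leq_imset_card rep _)) // subset_leq_card //.
apply/subsetP => m; rewrite inE; apply: contraR => mNrep.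
rewrite summxE big1 // => j _; rewrite mxE std_eE.
case: eqP => [rep_j | _]; last by rewrite mulr0.
have [-> | yj] := eqVneq (y 0 j) 0; first by rewrite mul0r.
by move: mNrep; rewrite -rep_j imset_f // inE.
Qed.

Lemma addv_span_reps : (U + span_reps)%VS = fullv.
Proof.
apply/eqP; rewrite eqEsubv subvf; apply/subvP => y _.
by rewrite -(subrK (proj_reps y) y) memv_add ?sub_proj_reps ?proj_reps_span.
Qed.

Lemma dim_span_reps_le : (\dim span_reps <= #|reps|)%N.
Proof. by rewrite cardE (leq_trans (dim_span _)) // size_map. Qed.

Lemma span_reps_complement l :
  \dim U = (k - l)%N -> #|reps| = l ->
  (U :&: span_reps = 0)%VS /\ \dim span_reps = l.
Proof.
move=> dimU card_l; have := dimv_sum_cap U span_reps.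
rewrite addv_span_reps dimvf dim_matrix mul1r dimU.
have l_le_k : (l <= k)%N by rewrite -card_l (leq_trans (max_card _)) ?card_ord.
have := dim_span_reps_le; rewrite card_l => dimW_le eq_dims.
suff [dim_cap ->] : \dim (U :&: span_reps) = 0%N /\ \dim span_reps = l.
  by split => //; apply/eqP; rewrite -dimv_eq0 dim_cap.
move: dimW_le eq_dims; move: (\dim span_reps) (\dim (U :&: span_reps)) => b a; lia.
Qed.

Lemma wt_span_reps_min w x :
  (U :&: span_reps = 0)%VS -> w \in span_reps -> x \in U ->
  (wt w <= wt (w + x))%N.
Proof.
move=> capUW wW xU.
suff proj_wx : proj_reps (w + x) = w by rewrite -{1}proj_wx wt_proj_reps.
have sub_W : proj_reps (w + x) - w \in span_reps by rewrite memvB ?proj_reps_span.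
have sub_U : proj_reps (w + x) - w \in U.
  have -> : proj_reps (w + x) - w = x - (w + x - proj_reps (w + x)).
    by rewrite opprB addrCA opprD [x + _]addrCA subrr addr0.
  by rewrite memvB ?sub_proj_reps.
by apply/eqP; rewrite -subr_eq0 -memv0 -capUW memv_cap sub_U.
Qed.

End CosetRepresentatives.

Theorem lemma6 (F : finFieldType) (k l : nat) (U : {vspace 'rV[F]_k}) :
  \dim U = (k - l)%N ->
  #|[set coset U (std_e i) | i in [set i : 'I_k | (std_e i : 'rV[F]_k) \notin U]]| = l ->
  exists C : {set 'rV[F]_k},
    #|C| = (#|F| ^ l)%N /\ is_clique (coset_partition U) C.
Proof.
move=> dimU card_cosets.
have card_l : #|reps U| = l by rewrite -card_reps.
have [capUW dimW] := span_reps_complement dimU card_l.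
exists [set v | v \in span_reps U]; split.
  by rewrite cardsE card_vspace dimW.
apply: (minimal_complement_clique capUW) => w x.
exact: wt_span_reps_min.
Qed.
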